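(* Let $\kappa$ be a regular cardinal and let $\mathcal{T}$ be a countable complete first-order theory in a countable relational vocabulary $L$. Suppose that for every $\alpha<\kappa^+$ there are $\eta,\eta'\in\kappa^\kappa$ such that $M_\eta\models\mathcal{T}$, $M_{\eta'}\models\mathcal{T}$, $M_\eta\equiv^\alpha_{\kappa^+\kappa}M_{\eta'}$ and $M_\eta\not\cong M_{\eta'}$. Then the relation $\cong_{\mathcal{T}}\subseteq\kappa^\kappa\times\kappa^\kappa$ is not $\kappa$-Borel.
   Context: Coding of structures: $L=\{Q_m\mid m<\omega\}$ is a countable relational vocabulary and $\pi:\kappa^{<\omega}\to\kappa$ is a fixed bijection. For $\eta\in\kappa^\kappa$, $M_\eta$ is the $L$-structure with domain $\kappa$ in which, for $(a_1,\dots,a_n)\in\kappa^n$, $(a_1,\dots,a_n)\in Q_m^{M_\eta}$ iff $Q_m$ has arity $n$ and $\eta(\pi(m,a_1,\dots,a_n))>0$. The relation $\cong_{\mathcal{T}}$ is the set of pairs $(\eta,\xi)\in\kappa^\kappa\times\kappa^\kappa$ such that either ($M_\eta\models\mathcal{T}$, $M_\xi\models\mathcal{T}$ and $M_\eta\cong M_\xi$) or ($M_\eta\not\models\mathcal{T}$ and $M_\xi\not\models\mathcal{T}$). $M\equiv^\alpha_{\kappa^+\kappa}N$ means $M$ and $N$ satisfy the same $L_{\kappa^+\kappa}$-sentences of quantifier rank at most $\alpha$. Topology: for $X\subseteq\kappa$ with $|X|<\kappa$ and $\eta:X\to\kappa$, let $N_\eta=\{\zeta\in\kappa^\kappa\mid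 \eta\subseteq\zeta\}$; these sets together with $\emptyset$ are the basic $\kappa$-open subsets of $\kappa^\kappa$, and the basic $\kappa$-open subsets of $\kappa^\kappa\times\kappa^\kappa$ are the products $N_\eta\times N_\xi$ of basic $\kappa$-open sets. The $\kappa$-Borel sets (of $\kappa^\kappa$, resp. $\kappa^\kappa\times\kappa^\kappa$) form the smallest class containing the basic $\kappa$-open sets and closed under complements, unions of at most $\kappa$ sets and intersections of at most $\kappa$ sets. *)

(* Generalized descriptive set theory setting: kappa is
   represented by a type K with a well-order lt whose order type is the
   initial ordinal kappa. *)
From Stdlib Require Import List Arith.
Import ListNotations.


Definition injective {A B : Type} (f : A -> B) : Prop :=
  forall x y, f x = f y -> x = y.

Definition surjective {A B : Type} (f : A -> B) : Prop :=
  forall y, exists x, f x = y.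

Definition bijective {A B : Type} (f : A -> B) : Prop :=
  injective f /\ surjective f.

Definition smaller {K : Type} (X : K -> Prop) : Prop :=
  ~ exists f : K -> {x : K | X x}, injective f.

Definition well_order {W : Type} (lt : W -> W -> Prop) : Prop :=
  well_founded lt
  /\ (forall x, ~ lt x x)
  /\ (forall x y z, lt x y -> lt y z -> lt x z)
  /\ (forall x y, lt x y \/ x = y \/ lt y x).

(* (K, lt) is an infinite regular cardinal: an infinite initial ordinal
   in which every subset of size < kappa is bounded. *)
Definition regular_cardinal {K : Type} (lt : K -> K -> Prop) : Prop :=
  well_order lt
  /\ (exists f : nat -> K, injective f)
  /\ (forall x : K, smaller (fun y => lt y x))
  /\ (forall X : K -> Prop, smaller X -> exists y, forall x, X x -> lt x y).

Definition canonical_omega {K : Type} (lt : K -> K -> Prop) (iota : nat -> K) : Prop :=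
  (forall n, lt (iota n) (iota (S n)))
  /\ (forall n x, lt x (iota n) -> exists m, x = iota m).

Record structure := Structure {
  dom : Type;
  rel : nat -> list dom -> Prop
}.

Definition isomorphic (arity : nat -> nat) (M N : structure) : Prop :=
  exists f : dom M -> dom N, bijective f /\
    forall m (l : list (dom M)), length l = arity m ->
      (rel M m l <-> rel N m (map f l)).

Inductive fo_form : Type :=
| fatom : nat -> list nat -> fo_form
| feq : nat -> nat -> fo_form
| fneg : fo_form -> fo_form
| fand : fo_form -> fo_form -> fo_form
| fex : nat -> fo_form -> fo_form.

Fixpoint ffree (f : fo_form) (v : nat) : Prop :=
  match f with
  | fatom _ vs => In v vs
  | feq x y => v = x \/ v = y
  | fneg g => ffree g v
  | fand g h => ffree g v \/ ffree h v
  | fex n g => ffree g v /\ v <> n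
  end.

Definition fo_sentence (f : fo_form) : Prop := forall v, ~ ffree f v.

Fixpoint fsat (arity : nat -> nat) (M : structure) (s : nat -> dom M) (f : fo_form) : Prop :=
  match f with
  | fatom m vs => length vs = arity m /\ rel M m (map s vs)
  | feq x y => s x = s y
  | fneg g => ~ fsat arity M s g
  | fand g h => fsat arity M s g /\ fsat arity M s h
  | fex n g => exists d : dom M,
      fsat arity M (fun k => if Nat.eqb k n then d else s k) g
  end.

(* M |= T  (structures have nonempty domains) *)
Definition models (arity : nat -> nat) (T : fo_form -> Prop) (M : structure) : Prop :=
  inhabited (dom M) /\ forall f, T f -> forall s, fsat arity M s f.

(* complete theory: consistent, and decides every sentence
   (semantically, equivalent to syntactic completeness by the completeness theorem) *)
Definition complete_theory (arity : nat -> nat) (T : fo_form -> Prop) : Prop :=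
  (exists M, models arity T M)
  /\ forall f, fo_sentence f ->
       (forall M, models arity T M -> forall s, fsat arity M s f)
       \/ (forall M, models arity T M -> forall s, fsat arity M s (fneg f)).

(* variables are indexed by K; conjunctions over subsets of K (at most kappa
   formulas); quantification over sets of fewer than kappa variables. *)

Inductive inf_form (K : Type) : Type :=
| iatom : nat -> list K -> inf_form K
| ieq : K -> K -> inf_form K
| ineg : inf_form K -> inf_form K
| iconj : (K -> Prop) -> (K -> inf_form K) -> inf_form K
| iex : (K -> Prop) -> inf_form K -> inf_form K.
Arguments iatom {K}. Arguments ieq {K}. Arguments ineg {K}.
Arguments iconj {K}. Arguments iex {K}.

Fixpoint iwf {K : Type} (f : inf_form K) : Prop :=
  match f with
  | iatom _ _ => True
  | ieq _ _ => True
  | ineg g => iwf g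
  | iconj P fs => forall i, P i -> iwf (fs i)
  | iex X g => smaller X /\ iwf g
  end.

Fixpoint ifree {K : Type} (f : inf_form K) (v : K) : Prop :=
  match f with
  | iatom _ vs => In v vs
  | ieq x y => v = x \/ v = y
  | ineg g => ifree g v
  | iconj P fs => exists i, P i /\ ifree (fs i) v
  | iex X g => ifree g v /\ ~ X v
  end.

Definition inf_sentence {K : Type} (f : inf_form K) : Prop := forall v, ~ ifree f v.

Fixpoint isat {K : Type} (arity : nat -> nat) (M : structure) (s : K -> dom M)
  (f : inf_form K) : Prop :=
  match f with
  | iatom m vs => length vs = arity m /\ rel M m (map s vs)
  | ieq x y => s x = s y
  | ineg g => ~ isat arity M s g
  | iconj P fs => forall i, P i -> isat arity M s (fs i)
  | iex X g => exists s' : K -> dom M,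
      (forall v, ~ X v -> s' v = s v) /\ isat arity M s' g
  end.

(* quantifier rank <= alpha, where alpha is an element of a well-order W
   (representing the ordinal given by its initial segment) *)
Fixpoint rank_le {K W : Type} (ltW : W -> W -> Prop) (alpha : W) (f : inf_form K) : Prop :=
  match f with
  | iatom _ _ => True
  | ieq _ _ => True
  | ineg g => rank_le ltW alpha g
  | iconj P fs => forall i, P i -> rank_le ltW alpha (fs i)
  | iex _ g => exists beta, ltW beta alpha /\ rank_le ltW beta g
  end.

Definition inf_equiv (K : Type) {W : Type} (ltW : W -> W -> Prop) (alpha : W)
  (arity : nat -> nat) (M N : structure) : Prop :=
  forall f : inf_form K, iwf f -> inf_sentence f -> rank_le ltW alpha f ->
    ((forall s, isat arity M s f) <-> (forall s, isat arity N s f)).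

(* M_eta: domain K, (a_1..a_n) in Q_m iff n = arity m and eta(pi(m,a_1,..,a_n)) > 0 *)
Definition M_of {K : Type} (lt : K -> K -> Prop) (iota : nat -> K) (pi : list K -> K)
  (arity : nat -> nat) (eta : K -> K) : structure :=
  {| dom := K;
     rel := fun m l => length l = arity m /\ exists y, lt y (eta (pi (iota m :: l))) |}.

Definition iso_T {K : Type} (lt : K -> K -> Prop) (iota : nat -> K) (pi : list K -> K)
  (arity : nat -> nat) (T : fo_form -> Prop) (z : (K -> K) * (K -> K)) : Prop :=
  let Me := M_of lt iota pi arity (fst z) in
  let Mx := M_of lt iota pi arity (snd z) in
  (models arity T Me /\ models arity T Mx /\ isomorphic arity Me Mx)
  \/ (~ models arity T Me /\ ~ models arity T Mx).

Definition nbhd {K : Type} (X : K -> Prop) (p : K -> K) (z : K -> K) : Prop :=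
  forall x, X x -> z x = p x.

Inductive kBorel {K : Type} : ((K -> K) * (K -> K) -> Prop) -> Prop :=
| kb_empty : kBorel (fun _ => False)
| kb_basic (X : K -> Prop) (p : K -> K) (Y : K -> Prop) (q : K -> K) :
    smaller X -> smaller Y ->
    kBorel (fun z => nbhd X p (fst z) /\ nbhd Y q (snd z))
| kb_compl (A : (K -> K) * (K -> K) -> Prop) :
    kBorel A -> kBorel (fun z => ~ A z)
| kb_union (F : K -> (K -> K) * (K -> K) -> Prop) :
    (forall i, kBorel (F i)) -> kBorel (fun z => exists i, F i z)
| kb_inter (F : K -> (K -> K) * (K -> K) -> Prop) :
    (forall i, kBorel (F i)) -> kBorel (fun z => forall i, F i z)
| kb_ext (A B : (K -> K) * (K -> K) -> Prop) :
    kBorel A -> (forall z, A z <-> B z) -> kBorel B.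

From Stdlib Require Import List Arith.
From Stdlib Require Import Classical ClassicalEpsilon ProofIrrelevance FunctionalExtensionality.
From Stdlib Require Import Relation_Operators Lexicographic_Product Eqdep.
Import ListNotations.

(* The proof is Vaught's transform argument in the generalized Baire space.  Conditions are
   injections [f] defined below some [b < kappa], and a bijection [s] of [kappa] acts on codes by
   pulling back structures, [transport s x], so that [M_(transport s x)] is isomorphic to [M_x].
   Since [kappa] is regular, any [kappa] dense sets of conditions are met by a bijection extending a
   given condition.  By induction on a kappa-Borel set [A], for every [eta] the section
   [{y | A (eta, y)}] has a forcing description by a family of L_{kappa^+ kappa} formulas [Phi b]
   with free variables below [b] and quantifier rank bounded in a well-order of size [kappa]:
   complements are forcing negations, unions are disjunctions closed under "densely forced".
   For an invariant set such as the isomorphism relation, genericity turns this into a single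
   sentence [Phi bot] with [A (eta, xi)] iff [M_xi |= Phi bot].  For the models [eta], [eta'] which
   agree up to that rank, [A (eta, eta)] then yields [A (eta, eta')], contradicting [M_eta] and
   [M_eta'] not being isomorphic. *)

Local Notation em := excluded_middle_informative.

(** * Isomorphism invariance of first-order truth *)

Section Isomorphism.

Variable arity : nat -> nat.

Lemma fsat_isomorphism (M N : structure) (f : dom M -> dom N) : bijective f ->
  (forall m (l : list (dom M)), length l = arity m -> (rel M m l <-> rel N m (map f l))) ->
  forall phi (s : nat -> dom M), fsat arity M s phi <-> fsat arity N (fun k => f (s k)) phi.
Proof.
  intros [fi fs] Hr phi. induction phi as [m vs|x y|g IH|g1 IH1 g2 IH2|n g IH]; intros s; simpl.
  - rewrite <- (map_map s f). split; intros [h1 h2]; split; auto.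
    + apply Hr; auto. rewrite length_map; auto.
    + apply (Hr m (map s vs)); auto. rewrite length_map; auto.
  - split; [congruence|apply fi].
  - rewrite IH. tauto.
  - rewrite IH1, IH2. tauto.
  - assert (E : forall d, (fun k => f (if Nat.eqb k n then d else s k)) =
                          (fun k => if Nat.eqb k n then f d else f (s k))).
    { intros d. apply functional_extensionality. intros k. destruct (Nat.eqb k n); auto. }
    split.
    + intros [d h]. exists (f d). rewrite IH, E in h. exact h.
    + intros [d' h]. destruct (fs d') as [d <-]. exists d. rewrite IH, E. exact h.
Qed.

Lemma isomorphic_refl M : isomorphic arity M M.
Proof.
  exists (fun a => a). split; [split; [intros a b e; exact e|intros y; exists y; reflexivity]|].
  intros m l _. rewrite map_id. tauto.
Qed.

Lemma isomorphic_sym M N : isomorphic arity M N -> isomorphic arity N M.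
Proof.
  intros [f [[fi fs] Hr]].
  assert (Hg : forall y, {x | f x = y}) by (intros y; apply constructive_indefinite_description; auto).
  set (g := fun y => proj1_sig (Hg y)).
  assert (fg : forall y, f (g y) = y) by (intros y; exact (proj2_sig (Hg y))).
  exists g. split; [split|].
  - intros a b e. rewrite <- (fg a), <- (fg b), e. auto.
  - intros x. exists (f x). apply fi. rewrite fg. auto.
  - intros m l hl. rewrite (Hr m (map g l)) by (rewrite length_map; auto).
    rewrite map_map, (map_ext _ _ fg), map_id. tauto.
Qed.

Lemma isomorphic_trans M N P : isomorphic arity M N -> isomorphic arity N P -> isomorphic arity M P.
Proof.
  intros [f [[fi fs] Hf]] [g [[gi gs] Hg]]. exists (fun x => g (f x)). split; [split|].
  - intros a b e. auto.
  - intros z. destruct (gs z) as [y <-]. destruct (fs y) as [x <-]. eauto.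
  - intros m l hl. rewrite (Hf m l hl), (Hg m (map f l)), map_map by (rewrite length_map; auto). tauto.
Qed.

Lemma models_isomorphic T M N : isomorphic arity M N -> models arity T M -> models arity T N.
Proof.
  intros [f [[fi fs] Hr]] [[d] H]. split; [exact (inhabits (f d))|].
  intros phi hphi s.
  assert (Hg : forall y, {x | f x = y}) by (intros y; apply constructive_indefinite_description; auto).
  set (s0 := fun k => proj1_sig (Hg (s k))).
  assert (E : (fun k => f (s0 k)) = s).
  { apply functional_extensionality. intros k. exact (proj2_sig (Hg (s k))). }
  rewrite <- E. apply (fsat_isomorphism M N f (conj fi fs) Hr). auto.
Qed.

End Isomorphism.

Section Kappa.

Variable K : Type.
Variable lt : K -> K -> Prop.
Hypothesis Hreg : regular_cardinal lt.
Variable iota : nat -> K.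
Hypothesis Hiota : canonical_omega lt iota.
Variable pi : list K -> K.
Hypothesis Hpi : bijective pi.
Variable arity : nat -> nat.

(** * The regular cardinal kappa *)

Lemma lt_wf : well_founded lt. Proof. apply Hreg. Qed.
Lemma lt_irrefl x : ~ lt x x. Proof. apply Hreg. Qed.
Lemma lt_trans x y z : lt x y -> lt y z -> lt x z. Proof. apply Hreg. Qed.
Lemma lt_total x y : lt x y \/ x = y \/ lt y x. Proof. apply Hreg. Qed.

Definition le a b := lt a b \/ a = b.

Lemma le_refl a : le a a. Proof. now right. Qed.
Lemma le_trans a b c : le a b -> le b c -> le a c.
Proof. intros [h|<-] [h'|<-]; [left; eauto using lt_trans|left|left|right]; auto. Qed.
Lemma le_lt_trans a b c : le a b -> lt b c -> lt a c.
Proof. intros [h|<-] h'; eauto using lt_trans. Qed.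
Lemma lt_le_trans a b c : lt a b -> le b c -> lt a c.
Proof. intros h [h'|<-]; eauto using lt_trans. Qed.
Lemma not_lt_le a b : ~ lt a b -> le b a.
Proof. intros h. destruct (lt_total a b) as [?|[<-|?]]; [tauto|right|left]; auto. Qed.
Lemma le_not_lt a b : le a b -> ~ lt b a.
Proof. intros h h'. apply (lt_irrefl a). eapply le_lt_trans; eauto. Qed.

Lemma exists_minimal (P : K -> Prop) x : P x -> exists m, P m /\ forall y, P y -> ~ lt y m.
Proof.
  induction x as [x IH] using (well_founded_ind lt_wf). intros Px.
  destruct (classic (exists y, lt y x /\ P y)) as [[y [h1 h2]]|h]; eauto.
  exists x; split; auto. intros y Py hy; apply h; eauto.
Qed.

Lemma smaller_subset (X Y : K -> Prop) : (forall x, X x -> Y x) -> smaller Y -> smaller X.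
Proof.
  intros HXY HY [h hi]. apply HY.
  exists (fun k => exist Y (proj1_sig (h k)) (HXY _ (proj2_sig (h k)))).
  intros a b e. apply hi. apply (f_equal (@proj1_sig _ _)) in e. simpl in e.
  destruct (h a), (h b). simpl in e. subst. f_equal. apply proof_irrelevance.
Qed.

Lemma smaller_initial c : smaller (fun x => lt x c). Proof. apply Hreg. Qed.

Lemma bounded_smaller (X : K -> Prop) c : (forall x, X x -> lt x c) -> smaller X.
Proof. intros H. exact (smaller_subset X _ H (smaller_initial c)). Qed.

Lemma smaller_bounded X : smaller X -> exists c, forall x, X x -> lt x c.
Proof. apply Hreg. Qed.

Lemma iota_lt n m : n < m -> lt (iota n) (iota m).
Proof. induction 1; [|eapply lt_trans; eauto]; apply Hiota. Qed.

Lemma iota_inj n m : iota n = iota m -> n = m.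
Proof.
  intros e. destruct (Nat.lt_trichotomy n m) as [h|[h|h]]; auto;
    apply iota_lt in h; rewrite e in h; destruct (lt_irrefl _ h).
Qed.

Lemma smaller_singleton (a : K) : smaller (fun x => x = a).
Proof.
  intros [h hi].
  assert (e : iota 0 = iota 1).
  { apply hi. destruct (h (iota 0)) as [x1 e1], (h (iota 1)) as [x2 e2]. subst.
    f_equal; apply proof_irrelevance. }
  apply iota_inj in e. discriminate.
Qed.

Lemma exists_gt (a : K) : exists c, lt a c.
Proof. destruct (smaller_bounded _ (smaller_singleton a)) as [c Hc]. eauto. Qed.

Lemma inhabited_K : inhabited K. Proof. exact (inhabits (iota 0)). Qed.

Definition bot : K := epsilon inhabited_K (fun b => forall a, ~ lt a b).

Lemma bot_minimal a : ~ lt a bot.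
Proof.
  revert a. apply (epsilon_spec inhabited_K (fun b => forall a, ~ lt a b)).
  destruct (exists_minimal (fun _ => True) (iota 0) I) as [m [_ hm]]. eauto.
Qed.

Definition succ (a : K) : K := epsilon inhabited_K (fun c => lt a c /\ forall d, lt a d -> le c d).

Lemma succ_spec a : lt a (succ a) /\ forall d, lt a d -> le (succ a) d.
Proof.
  apply (epsilon_spec inhabited_K (fun c => lt a c /\ forall d, lt a d -> le c d)).
  destruct (exists_gt a) as [c hc]. destruct (exists_minimal (lt a) c hc) as [m [h1 h2]].
  exists m; split; auto. intros d hd. apply not_lt_le. exact (h2 d hd).
Qed.

Lemma lt_succ a : lt a (succ a). Proof. apply succ_spec. Qed.

Lemma lt_succ_iff x a : lt x (succ a) <-> le x a.
Proof.
  split.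
  - intros h. apply not_lt_le. intros h'. exact (le_not_lt _ _ (proj2 (succ_spec a) x h') h).
  - intros h. eapply le_lt_trans; eauto using lt_succ.
Qed.

Definition kmax (a b : K) : K := if em (lt a b) then b else a.

Lemma le_kmax_l a b : le a (kmax a b).
Proof. unfold kmax; destruct (em (lt a b)); [left|right]; auto. Qed.
Lemma le_kmax_r a b : le b (kmax a b).
Proof. unfold kmax; destruct (em (lt a b)); [right|apply not_lt_le]; auto. Qed.

Lemma bounded_union (I : K -> Prop) (F : K -> K -> Prop) : smaller I ->
  (forall i, I i -> exists c, forall v, F i v -> lt v c) ->
  exists c, forall i v, I i -> F i v -> lt v c.
Proof.
  intros HI HF.
  set (cb := fun i => epsilon inhabited_K (fun c => I i -> forall v, F i v -> lt v c)).
  assert (Hcb : forall i, I i -> forall v, F i v -> lt v (cb i)).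
  { intros i. apply (epsilon_spec inhabited_K (fun c => I i -> forall v, F i v -> lt v c)).
    destruct (classic (I i)) as [h|h]; [destruct (HF i h) as [c hc]|exists bot]; eauto; tauto. }
  assert (Hs : smaller (fun c => exists i, I i /\ c = cb i)).
  { intros [h hi]. apply HI.
    assert (X : forall k, {i | I i /\ proj1_sig (h k) = cb i}).
    { intros k. apply constructive_indefinite_description. destruct (h k) as [c [i [h1 h2]]]. eauto. }
    exists (fun k => exist I (proj1_sig (X k)) (proj1 (proj2_sig (X k)))).
    intros a b e. apply hi. apply (f_equal (@proj1_sig _ _)) in e. simpl in e.
    destruct (X a) as [ia [ha1 ha2]], (X b) as [ib [hb1 hb2]]. simpl in e. subst ib.
    destruct (h a) as [ca pa], (h b) as [cb' pb]. simpl in *. subst.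
    f_equal. apply proof_irrelevance. }
  destruct (smaller_bounded _ Hs) as [c Hc]. exists c. intros i v hi hv.
  eapply lt_trans; [apply Hcb|apply Hc]; eauto.
Qed.

Lemma list_bounded (l : list K) : exists c, forall v, In v l -> lt v c.
Proof.
  induction l as [|a l [c IH]]; [exists bot; simpl; tauto|].
  exists (kmax (succ a) c). intros v [<-|h].
  - eapply lt_le_trans; [apply lt_succ|apply le_kmax_l].
  - eapply lt_le_trans; [apply IH; auto|apply le_kmax_r].
Qed.

Definition pinv (k : K) : list K := epsilon (inhabits []) (fun l => pi l = k).

Lemma pinv_pi l : pinv (pi l) = l.
Proof.
  apply Hpi. apply (epsilon_spec (inhabits []) (fun l' => pi l' = pi l)). eauto.
Qed.

(** * Generic bijections *)

Definition inj_below (b : K) (f : K -> K) :=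
  forall a a', lt a b -> lt a' b -> f a = f a' -> a = a'.
Definition extends (b : K) (f : K -> K) (b' : K) (g : K -> K) :=
  le b b' /\ forall a, lt a b -> f a = g a.
Definition dense (D : K -> (K -> K) -> Prop) :=
  forall b f, inj_below b f -> exists b' g, inj_below b' g /\ extends b f b' g /\ D b' g.
Definition meets (s : K -> K) (D : K -> (K -> K) -> Prop) :=
  exists b g, D b g /\ forall a, lt a b -> g a = s a.

Lemma extends_refl b f : extends b f b f.
Proof. split; auto using le_refl. Qed.

Lemma extends_trans b f b' g b'' h :
  extends b f b' g -> extends b' g b'' h -> extends b f b'' h.
Proof.
  intros [h1 h2] [h3 h4]. split; [eapply le_trans; eauto|].
  intros a ha. rewrite h2; auto. apply h4. eapply lt_le_trans; eauto.
Qed.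

Lemma extends_same s b b' : le b b' -> extends b s b' s.
Proof. now split. Qed.

Lemma bijective_inj_below s b : bijective s -> inj_below b s.
Proof. intros [h _] a a' _ _. apply h. Qed.

Lemma inj_below_bot f : inj_below bot f.
Proof. intros a a' h. destruct (bot_minimal _ h). Qed.

Definition cond := (K * (K -> K))%type.
Definition cond_ok (c : cond) := inj_below (fst c) (snd c).
Definition cond_ext (c c' : cond) := extends (fst c) (snd c) (fst c') (snd c').

Definition fresh_value (b : K) (f : K -> K) : K :=
  epsilon inhabited_K (fun v => forall a, lt a b -> f a <> v).

Lemma fresh_value_spec b f a : lt a b -> f a <> fresh_value b f.
Proof.
  revert a. apply (epsilon_spec inhabited_K (fun v => forall a, lt a b -> f a <> v)).
  destruct (bounded_union (fun a => lt a b) (fun a v => v = f a) (smaller_initial b)) as [c hc].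
  { intros i _. exists (succ (f i)). intros v ->. apply lt_succ. }
  exists c. intros a ha e. exact (lt_irrefl _ (hc a c ha (eq_sym e))).
Qed.

Definition add_to_range (c : cond) (i : K) : cond :=
  (succ (fst c), fun a => if em (a = fst c) then
     (if em (exists a', lt a' (fst c) /\ snd c a' = i) then fresh_value (fst c) (snd c) else i)
     else snd c a).

Lemma add_to_range_ok c i : cond_ok c -> cond_ok (add_to_range c i).
Proof.
  destruct c as [b f]. intros hc a a' ha ha' e. unfold add_to_range in *; simpl in *.
  apply lt_succ_iff in ha, ha'.
  assert (Hnew : forall a0, lt a0 b -> f a0 <>
            (if em (exists a', lt a' b /\ f a' = i) then fresh_value b f else i)).
  { intros a0 h0 e0. destruct (em (exists a', lt a' b /\ f a' = i)) as [h|h].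
    - exact (fresh_value_spec b f a0 h0 e0).
    - apply h. eauto. }
  destruct (em (a = b)) as [->|h1]; destruct (em (a' = b)) as [->|h2]; auto.
  - destruct ha' as [ha'|]; [|congruence]. destruct (Hnew a' ha'); auto.
  - destruct ha as [ha|]; [|congruence]. destruct (Hnew a ha); auto.
  - destruct ha as [ha|]; [|congruence]. destruct ha' as [ha'|]; [|congruence]. auto.
Qed.

Lemma add_to_range_ext c i : cond_ext c (add_to_range c i).
Proof.
  destruct c as [b f]. split; simpl; [left; apply lt_succ|].
  intros a ha. destruct (em (a = b)) as [->|]; auto. destruct (lt_irrefl _ ha).
Qed.

Lemma add_to_range_hits c i : exists a, lt a (fst (add_to_range c i)) /\ snd (add_to_range c i) a = i.
Proof.
  destruct c as [b f]. simpl. destruct (em (exists a', lt a' b /\ f a' = i)) as [[a' [h1 h2]]|h].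
  - exists a'. split; [eapply lt_trans; eauto using lt_succ|].
    destruct (em (a' = b)) as [->|]; auto. destruct (lt_irrefl _ h1).
  - exists b. split; [apply lt_succ|]. destruct (em (b = b)); [|congruence].
    destruct (em (exists a', lt a' b /\ f a' = i)); tauto.
Qed.

Section GenericBijection.

Variable D : K -> K -> (K -> K) -> Prop.
Hypothesis HD : forall i, dense (D i).
Variable b0 : K.
Variable f0 : K -> K.
Hypothesis H0 : inj_below b0 f0.

Definition enter_dense (i : K) (c : cond) : cond :=
  if em (cond_ok c)
  then epsilon (inhabits c) (fun c' => cond_ok c' /\ cond_ext c c' /\ D i (fst c') (snd c'))
  else c.

Lemma enter_dense_spec i c : cond_ok c ->
  cond_ok (enter_dense i c) /\ cond_ext c (enter_dense i c) /\
  D i (fst (enter_dense i c)) (snd (enter_dense i c)).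
Proof.
  intros hc. unfold enter_dense. destruct (em (cond_ok c)); [|tauto].
  apply (epsilon_spec (inhabits c) (fun c' => cond_ok c' /\ cond_ext c c' /\ D i (fst c') (snd c'))).
  destruct (HD i (fst c) (snd c) hc) as [b' [g h]]. exists (b', g); auto.
Qed.

Definition chain_ub (i : K) (prev : K -> cond) (c : K) :=
  le b0 c /\ forall j, lt j i -> le (fst (prev j)) c.
Definition chain_sup (i : K) (prev : K -> cond) : K :=
  epsilon inhabited_K (fun c => chain_ub i prev c /\ forall c', chain_ub i prev c' -> le c c').

Lemma chain_sup_spec i prev :
  chain_ub i prev (chain_sup i prev) /\ forall c', chain_ub i prev c' -> le (chain_sup i prev) c'.
Proof.
  apply (epsilon_spec inhabited_K (fun c => chain_ub i prev c /\ forall c', chain_ub i prev c' -> le c c')).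
  destruct (bounded_union (fun j => lt j i) (fun j v => v = fst (prev j)) (smaller_initial i)) as [c1 hc1].
  { intros j _. exists (succ (fst (prev j))). intros v ->. apply lt_succ. }
  assert (hub : chain_ub i prev (kmax b0 c1)).
  { split; [apply le_kmax_l|]. intros j hj. left.
    eapply lt_le_trans; [apply (hc1 j)|apply le_kmax_r]; eauto. }
  destruct (exists_minimal _ _ hub) as [m [hm1 hm2]]. exists m. split; auto.
  intros c' hc'. apply not_lt_le. exact (hm2 c' hc').
Qed.

Definition chain_union (i : K) (prev : K -> cond) : cond :=
  (chain_sup i prev, fun a => if em (lt a b0) then f0 a else
     snd (prev (epsilon inhabited_K (fun j => lt j i /\ lt a (fst (prev j))))) a).

Section ChainUnion.

Variable i : K.
Variable prev : K -> cond.
Hypothesis Hprev_ok : forall j, lt j i -> cond_ok (prev j) /\ cond_ext (b0, f0) (prev j).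
Hypothesis Hprev_chain : forall j j', lt j i -> lt j' i -> lt j j' -> cond_ext (prev j) (prev j').

Lemma chain_union_cover a : lt a (fst (chain_union i prev)) ->
  lt a b0 \/ exists j, lt j i /\ lt a (fst (prev j)).
Proof.
  intros ha. apply NNPP. intros h.
  assert (hub : chain_ub i prev a).
  { split; [apply not_lt_le; tauto|]. intros j hj. apply not_lt_le. intros h'. eauto. }
  exact (le_not_lt _ _ (proj2 (chain_sup_spec i prev) a hub) ha).
Qed.

Lemma chain_coherent j j' a : lt j i -> lt j' i -> lt a (fst (prev j)) -> lt a (fst (prev j')) ->
  snd (prev j) a = snd (prev j') a.
Proof.
  intros hj hj' h h'. destruct (lt_total j j') as [e|[<-|e]]; auto.
  - apply (Hprev_chain j j' hj hj' e); auto.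
  - symmetry. apply (Hprev_chain j' j hj' hj e); auto.
Qed.

Lemma chain_union_agree j a : lt j i -> lt a (fst (prev j)) ->
  snd (chain_union i prev) a = snd (prev j) a.
Proof.
  intros hj ha. simpl. destruct (em (lt a b0)) as [h|h].
  - apply (proj2 (proj2 (Hprev_ok j hj))); auto.
  - apply chain_coherent; auto;
      apply (epsilon_spec inhabited_K (fun j => lt j i /\ lt a (fst (prev j)))); eauto.
Qed.

Lemma chain_union_ext j : lt j i -> cond_ext (prev j) (chain_union i prev).
Proof.
  intros hj. split; [apply (proj2 (proj1 (chain_sup_spec i prev))); auto|].
  intros a ha. symmetry. apply chain_union_agree; auto.
Qed.

Lemma chain_union_ext0 : cond_ext (b0, f0) (chain_union i prev).
Proof.
  split; [apply (proj1 (proj1 (chain_sup_spec i prev)))|].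
  intros a ha. simpl in *. destruct (em (lt a b0)); tauto.
Qed.

Lemma chain_union_ok : cond_ok (chain_union i prev).
Proof.
  assert (Hbase : forall j a, lt j i -> lt a b0 -> lt a (fst (prev j))).
  { intros j a hj ha. eapply lt_le_trans; eauto. apply (Hprev_ok j hj). }
  assert (Hmono : forall j j' a, lt j i -> lt j' i -> le j j' -> lt a (fst (prev j)) -> lt a (fst (prev j'))).
  { intros j j' a hj hj' [e| <-] ha; auto. eapply lt_le_trans; eauto. apply (Hprev_chain j j' hj hj' e). }
  assert (Hin : forall j a a', lt j i -> lt a (fst (prev j)) -> lt a' (fst (prev j)) ->
            snd (chain_union i prev) a = snd (chain_union i prev) a' -> a = a').
  { intros j a a' hj h h' e. rewrite !(chain_union_agree j) in e; auto. apply (Hprev_ok j hj); auto. }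
  intros a a' ha ha' e.
  destruct (chain_union_cover a ha) as [h|[j [hj h]]];
    destruct (chain_union_cover a' ha') as [h'|[j' [hj' h']]].
  - simpl in e. destruct (em (lt a b0)), (em (lt a' b0)); try tauto. apply H0; auto.
  - apply (Hin j' a a'); eauto.
  - apply (Hin j a a'); eauto.
  - assert (hm : lt (kmax j j') i) by (unfold kmax; destruct (em (lt j j')); auto).
    apply (Hin (kmax j j') a a'); auto;
      [apply (Hmono j)|apply (Hmono j')]; auto using le_kmax_l, le_kmax_r.
Qed.

End ChainUnion.

(* Putting [i] into the range at stage [i] makes the limit surjective. *)
Definition stage (i : K) (prev : K -> cond) : cond := add_to_range (enter_dense i (chain_union i prev)) i.

Definition chain : K -> cond :=
  Fix lt_wf (fun _ => cond)
    (fun i rec => stage i (fun j => match em (lt j i) with left h => rec j h | right _ => (b0, f0) end)).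

Definition chain_below (i : K) (j : K) : cond := if em (lt j i) then chain j else (b0, f0).

Lemma chain_eq i : chain i = stage i (chain_below i).
Proof.
  unfold chain. rewrite Fix_eq; [reflexivity|].
  intros x f g H. f_equal. apply functional_extensionality. intros j.
  destruct (em (lt j x)); auto.
Qed.

Lemma chain_below_lt i j : lt j i -> chain_below i j = chain j.
Proof. intros h. unfold chain_below. destruct (em (lt j i)); tauto. Qed.

Definition chain_invariant (i : K) :=
  cond_ok (chain i) /\ cond_ext (b0, f0) (chain i) /\
  (forall j, lt j i -> cond_ext (chain j) (chain i) /\ lt (fst (chain j)) (fst (chain i))) /\
  (exists c, D i (fst c) (snd c) /\ cond_ext c (chain i)) /\
  (exists a, lt a (fst (chain i)) /\ snd (chain i) a = i).

Lemma chain_invariant_all i : chain_invariant i.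
Proof.
  induction i as [i IH] using (well_founded_ind lt_wf).
  assert (Hp1 : forall j, lt j i -> cond_ok (chain_below i j) /\ cond_ext (b0, f0) (chain_below i j)).
  { intros j hj. rewrite chain_below_lt; auto. split; apply IH; auto. }
  assert (Hp2 : forall j j', lt j i -> lt j' i -> lt j j' -> cond_ext (chain_below i j) (chain_below i j')).
  { intros j j' hj hj' e. rewrite !chain_below_lt; auto. apply (IH j' hj'); auto. }
  pose proof (chain_union_ext i _ Hp1 Hp2) as Uext.
  destruct (enter_dense_spec i _ (chain_union_ok i _ Hp1 Hp2)) as [Mok [Mext MD]].
  unfold chain_invariant. rewrite (chain_eq i). unfold stage.
  set (u := chain_union i (chain_below i)) in *. set (m := enter_dense i u) in *.
  assert (Hm : cond_ext m (add_to_range m i)) by apply add_to_range_ext.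
  split; [|split; [|split; [|split]]].
  - apply add_to_range_ok; auto.
  - eapply extends_trans; [apply chain_union_ext0|eapply extends_trans; eauto].
  - intros j hj. pose proof (Uext j hj) as e. rewrite chain_below_lt in e; auto. split.
    + eapply extends_trans; [apply e|eapply extends_trans; eauto].
    + eapply le_lt_trans; [apply e|eapply le_lt_trans; [apply Mext|apply lt_succ]].
  - exists m. auto.
  - apply add_to_range_hits.
Qed.

Lemma chain_domain_ge i : le i (fst (chain i)).
Proof.
  induction i as [i IH] using (well_founded_ind lt_wf).
  apply not_lt_le. intros h.
  apply (le_not_lt _ _ (IH _ h)). apply (chain_invariant_all i); auto.
Qed.

Lemma chain_coherent_all i j a : lt a (fst (chain i)) -> lt a (fst (chain j)) ->
  snd (chain i) a = snd (chain j) a.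
Proof.
  intros h h'. destruct (lt_total i j) as [e|[<-|e]]; auto.
  - apply (chain_invariant_all j); auto.
  - symmetry. apply (chain_invariant_all i); auto.
Qed.

Lemma lt_chain_domain a i : le (succ a) i -> lt a (fst (chain i)).
Proof.
  intros h. eapply lt_le_trans; [apply lt_succ|eapply le_trans; [apply h|apply chain_domain_ge]].
Qed.

Definition generic (a : K) : K := snd (chain (succ a)) a.

Lemma generic_agree i a : lt a (fst (chain i)) -> generic a = snd (chain i) a.
Proof. intros h. apply chain_coherent_all; auto. apply lt_chain_domain, le_refl. Qed.

Lemma generic_spec :
  bijective generic /\ (forall a, lt a b0 -> generic a = f0 a) /\ forall i, meets generic (D i).
Proof.
  split; [split|split].
  - intros a a' e. set (i := kmax (succ a) (succ a')).
    assert (h1 : lt a (fst (chain i))) by apply lt_chain_domain, le_kmax_l.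
    assert (h2 : lt a' (fst (chain i))) by apply lt_chain_domain, le_kmax_r.
    rewrite (generic_agree i a h1), (generic_agree i a' h2) in e.
    exact (proj1 (chain_invariant_all i) a a' h1 h2 e).
  - intros y. destruct (proj2 (proj2 (proj2 (proj2 (chain_invariant_all y))))) as [a [h1 h2]].
    exists a. rewrite (generic_agree y); auto.
  - intros a ha. symmetry. apply (chain_invariant_all (succ a)). auto.
  - intros i. destruct (proj1 (proj2 (proj2 (proj2 (chain_invariant_all i))))) as [c [h1 [h2 h3]]].
    exists (fst c), (snd c). split; auto. intros a ha. rewrite h3; auto.
    symmetry. apply generic_agree. eapply lt_le_trans; eauto.
Qed.

End GenericBijection.

Theorem generic_bijection_exists (D : K -> K -> (K -> K) -> Prop) : (forall i, dense (D i)) ->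
  forall b0 f0, inj_below b0 f0 ->
  exists s, bijective s /\ (forall a, lt a b0 -> s a = f0 a) /\ forall i, meets s (D i).
Proof. intros HD b0 f0 H0. exists (generic D b0 f0). apply generic_spec; auto. Qed.

(** * Infinitary formulas *)

Lemma isat_agree (M : structure) (phi : inf_form K) (s s' : K -> dom M) :
  (forall v, ifree phi v -> s v = s' v) -> (isat arity M s phi <-> isat arity M s' phi).
Proof.
  revert s s'.
  induction phi as [m vs|x y|g IH|P fs IH|X g IH]; intros s s' H; simpl in *.
  - rewrite (map_ext_in s s' vs); [tauto|auto].
  - rewrite (H x), (H y); tauto.
  - rewrite (IH s s' H). tauto.
  - split; intros h i hi; [rewrite <- (IH i s s')|rewrite (IH i s s')]; eauto.
  - split; intros [s1 [h1 h2]].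
    + exists (fun v => if em (X v) then s1 v else s' v). split.
      * intros v hv. destruct (em (X v)); tauto.
      * rewrite <- (IH s1); auto. intros v hv. destruct (em (X v)); auto. rewrite h1; auto.
    + exists (fun v => if em (X v) then s1 v else s v). split.
      * intros v hv. destruct (em (X v)); tauto.
      * rewrite <- (IH s1); auto. intros v hv. destruct (em (X v)); auto.
        rewrite h1; auto. symmetry; auto.
Qed.

Lemma rank_le_mono {W} (ltW : W -> W -> Prop) :
  (forall x y z, ltW x y -> ltW y z -> ltW x z) ->
  forall (phi : inf_form K) a a', rank_le ltW a phi -> ltW a a' -> rank_le ltW a' phi.
Proof.
  intros Ht phi. induction phi as [m vs|x y|g IH|P fs IH|X g IH]; intros a a' H Ha; simpl in *; eauto.
  destruct H as [b [h1 h2]]. eauto.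
Qed.

Lemma rank_le_embed {W W'} (ltW : W -> W -> Prop) (ltW' : W' -> W' -> Prop) (h : W -> W') :
  (forall x y, ltW x y -> ltW' (h x) (h y)) ->
  forall (phi : inf_form K) a, rank_le ltW a phi -> rank_le ltW' (h a) phi.
Proof.
  intros Hh phi. induction phi as [m vs|x y|g IH|P fs IH|X g IH]; intros a H; simpl in *; auto.
  destruct H as [b [h1 h2]]. eauto.
Qed.

Definition itrue : inf_form K := iconj (fun _ => False) (fun _ => ieq bot bot).
Definition ifalse : inf_form K := ineg itrue.
Definition iand (p q : inf_form K) : inf_form K :=
  iconj (fun _ => True) (fun k => if em (k = bot) then p else q).
Definition ibigor (P : K -> Prop) (fs : K -> inf_form K) : inf_form K :=
  ineg (iconj P (fun k => ineg (fs k))).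

Lemma isat_ifalse M (s : K -> dom M) : ~ isat arity M s ifalse.
Proof. simpl; tauto. Qed.
Lemma ifree_itrue v : ~ ifree itrue v.
Proof. intros [i [h _]]; auto. Qed.

Lemma isat_iand M (s : K -> dom M) p q :
  isat arity M s (iand p q) <-> isat arity M s p /\ isat arity M s q.
Proof.
  simpl. split.
  - intros h. split.
    + specialize (h bot I). destruct (em (bot = bot)); tauto.
    + specialize (h (succ bot) I). destruct (em (succ bot = bot)) as [e|e]; auto.
      destruct (lt_irrefl bot). rewrite <- e at 2. apply lt_succ.
  - intros [h1 h2] k _. destruct (em (k = bot)); auto.
Qed.
Lemma ifree_iand p q v : ifree (iand p q) v -> ifree p v \/ ifree q v.
Proof. intros [k [_ h]]. destruct (em (k = bot)); auto. Qed.
Lemma iwf_iand p q : iwf p -> iwf q -> iwf (iand p q).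
Proof. intros h1 h2 k _. destruct (em (k = bot)); auto. Qed.
Lemma rank_le_iand {W} (ltW : W -> W -> Prop) a p q :
  rank_le ltW a p -> rank_le ltW a q -> rank_le ltW a (iand p q).
Proof. intros h1 h2 k _. destruct (em (k = bot)); auto. Qed.

Lemma isat_ibigor M (s : K -> dom M) P fs :
  isat arity M s (ibigor P fs) <-> exists k, P k /\ isat arity M s (fs k).
Proof.
  simpl. split.
  - intros h. apply NNPP. intros h'. apply h. intros i hi hs. eauto.
  - intros [k [h1 h2]] h. exact (h k h1 h2).
Qed.
Lemma ifree_ibigor P fs v : ifree (ibigor P fs) v -> exists k, P k /\ ifree (fs k) v.
Proof. intros [k [h1 h2]]. eauto. Qed.
Lemma iwf_ibigor P fs : (forall k, P k -> iwf (fs k)) -> iwf (ibigor P fs).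
Proof. intros h k hk. simpl. auto. Qed.
Lemma rank_le_ibigor {W} (ltW : W -> W -> Prop) a P fs :
  (forall k, P k -> rank_le ltW a (fs k)) -> rank_le ltW a (ibigor P fs).
Proof. intros h k hk. simpl. auto. Qed.

(* Conjunctions are indexed by [K], so the pair [u, v] is coded as [pi [u; v]]. *)
Definition idistinct (b : K) : inf_form K :=
  iconj (fun i => exists u v, i = pi [u; v] /\ lt u b /\ lt v b /\ u <> v)
        (fun i => match pinv i with [u; v] => ineg (ieq u v) | _ => itrue end).

Lemma isat_idistinct M (s : K -> dom M) b :
  isat arity M s (idistinct b) <-> forall u v, lt u b -> lt v b -> s u = s v -> u = v.
Proof.
  simpl. split.
  - intros h u v hu hv e. apply NNPP. intros ne.
    specialize (h (pi [u; v]) (ex_intro _ u (ex_intro _ v (conj eq_refl (conj hu (conj hv ne)))))).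
    rewrite pinv_pi in h. auto.
  - intros h i [u [v [-> [hu [hv ne]]]]]. rewrite pinv_pi. intros e. auto.
Qed.
Lemma ifree_idistinct b v : ifree (idistinct b) v -> lt v b.
Proof.
  intros [i [[u [w [-> [hu [hw _]]]]] h]]. rewrite pinv_pi in h. destruct h as [->| ->]; auto.
Qed.
Lemma iwf_idistinct b : iwf (idistinct b).
Proof. intros i [u [w [-> _]]]. rewrite pinv_pi. simpl. auto. Qed.
Lemma rank_le_idistinct {W} (ltW : W -> W -> Prop) a b : rank_le ltW a (idistinct b).
Proof. intros i [u [w [-> _]]]. rewrite pinv_pi. simpl. auto. Qed.

Definition between (b b' : K) (v : K) := ~ lt v b /\ lt v b'.

Definition iex_ext (b b' : K) (phi : inf_form K) : inf_form K :=
  iex (between b b') (iand (idistinct b') phi).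

Definition iforall_ext (Psi : K -> inf_form K) (b : K) : inf_form K :=
  iconj (le b) (fun b' => ineg (iex_ext b b' (ineg (Psi b')))).
Definition iexists_ext (Psi : K -> inf_form K) (b : K) : inf_form K :=
  ibigor (le b) (fun b' => iex_ext b b' (Psi b')).

Definition bounded_free (Phi : K -> inf_form K) := forall b v, ifree (Phi b) v -> lt v b.

Lemma ifree_iex_ext b b' phi v : (forall w, ifree phi w -> lt w b') ->
  ifree (iex_ext b b' phi) v -> lt v b.
Proof.
  intros H [h1 h2]. apply NNPP. intros h. apply h2. split; auto.
  destruct (ifree_iand _ _ _ h1); [apply ifree_idistinct|apply H]; auto.
Qed.

Lemma bounded_free_iforall_ext Psi : bounded_free Psi -> bounded_free (iforall_ext Psi).
Proof. intros H b v [b' [_ h]]. eapply ifree_iex_ext; [|exact h]. apply H. Qed.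
Lemma bounded_free_iexists_ext Psi : bounded_free Psi -> bounded_free (iexists_ext Psi).
Proof.
  intros H b v h. destruct (ifree_ibigor _ _ _ h) as [b' [_ h']].
  eapply ifree_iex_ext; [|exact h']. apply H.
Qed.
Lemma bounded_free_ineg Phi : bounded_free Phi -> bounded_free (fun b => ineg (Phi b)).
Proof. exact (fun H => H). Qed.

Lemma iwf_iex_ext b b' phi : iwf phi -> iwf (iex_ext b b' phi).
Proof.
  split; [apply (bounded_smaller _ b'); intros x [_ h]; auto|].
  apply iwf_iand; auto using iwf_idistinct.
Qed.
Lemma iwf_iforall_ext Psi : (forall b, iwf (Psi b)) -> forall b, iwf (iforall_ext Psi b).
Proof. intros H b b' _. apply iwf_iex_ext, H. Qed.
Lemma iwf_iexists_ext Psi : (forall b, iwf (Psi b)) -> forall b, iwf (iexists_ext Psi b).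
Proof. intros H b. apply iwf_ibigor. intros. apply iwf_iex_ext, H. Qed.

Lemma rank_le_iex_ext {W} (ltW : W -> W -> Prop) a a' b b' phi :
  rank_le ltW a phi -> ltW a a' -> rank_le ltW a' (iex_ext b b' phi).
Proof. intros. exists a. split; auto. apply rank_le_iand; auto using rank_le_idistinct. Qed.
Lemma rank_le_iforall_ext {W} (ltW : W -> W -> Prop) a a' Psi :
  (forall b, rank_le ltW a (Psi b)) -> ltW a a' -> forall b, rank_le ltW a' (iforall_ext Psi b).
Proof. intros H h b b' _. apply (rank_le_iex_ext ltW a); simpl; auto. Qed.
Lemma rank_le_iexists_ext {W} (ltW : W -> W -> Prop) a a' Psi :
  (forall b, rank_le ltW a (Psi b)) -> ltW a a' -> forall b, rank_le ltW a' (iexists_ext Psi b).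
Proof. intros H h b. apply rank_le_ibigor. intros. apply (rank_le_iex_ext ltW a); auto. Qed.

(** * Forcing over the coded structures *)

Definition Mcode (x : K -> K) : structure := M_of lt iota pi arity x.
Definition sat (x f : K -> K) (phi : inf_form K) : Prop := isat arity (Mcode x) f phi.

Lemma sat_bounded_free x Phi b f g : bounded_free Phi ->
  (forall a, lt a b -> f a = g a) -> sat x f (Phi b) -> sat x g (Phi b).
Proof. intros H e. apply isat_agree. intros v hv. symmetry. apply e, (H b v hv). Qed.

Lemma sat_iex_ext x phi b b' f : (forall w, ifree phi w -> lt w b') -> le b b' ->
  (sat x f (iex_ext b b' phi) <-> exists g, inj_below b' g /\ extends b f b' g /\ sat x g phi).
Proof.
  intros Hphi Hle. unfold sat, iex_ext. simpl isat at 1. split.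
  - intros [g [h1 h2]]. apply isat_iand in h2. rewrite isat_idistinct in h2.
    exists g. repeat split; try tauto. intros a ha. symmetry. apply h1. intros [h _]; auto.
  - intros [g [h1 [[_ h2] h3]]].
    assert (E : forall v, lt v b' -> (if em (between b b' v) then g v else f v) = g v).
    { intros v hv. destruct (em (between b b' v)) as [h|h]; auto.
      apply h2. apply NNPP. intros h'. apply h; split; auto. }
    exists (fun v => if em (between b b' v) then g v else f v). split.
    + intros v hv. destruct (em (between b b' v)); tauto.
    + apply isat_iand. rewrite isat_idistinct. split.
      * intros u v hu hv e. rewrite !E in e; auto.
      * rewrite (isat_agree (Mcode x) phi _ g); auto.
Qed.

Definition densely_sat (x : K -> K) (Psi : K -> inf_form K) (b : K) (f : K -> K) :=
  forall b' g, inj_below b' g -> extends b f b' g ->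
    exists b'' h, inj_below b'' h /\ extends b' g b'' h /\ sat x h (Psi b'').
Definition never_sat (x : K -> K) (Psi : K -> inf_form K) (b : K) (f : K -> K) :=
  forall b' g, inj_below b' g -> extends b f b' g -> ~ sat x g (Psi b').

Lemma sat_iforall_ext x Psi b f : bounded_free Psi ->
  (sat x f (iforall_ext Psi b) <-> forall b' g, inj_below b' g -> extends b f b' g -> sat x g (Psi b')).
Proof.
  intros HPsi. split.
  - intros h b' g hg he. specialize (h b' (proj1 he)).
    change (~ sat x f (iex_ext b b' (ineg (Psi b')))) in h.
    rewrite sat_iex_ext in h; [|apply HPsi|apply he].
    apply NNPP. intros n. apply h. exists g. auto.
  - intros h b' hle. change (~ sat x f (iex_ext b b' (ineg (Psi b')))).
    rewrite sat_iex_ext; [|apply HPsi|auto]. intros [g [h1 [h2 h3]]]. exact (h3 (h b' g h1 h2)).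
Qed.

Lemma sat_iexists_ext x Psi b f : bounded_free Psi ->
  (sat x f (iexists_ext Psi b) <-> exists b' g, inj_below b' g /\ extends b f b' g /\ sat x g (Psi b')).
Proof.
  intros HPsi. unfold iexists_ext, sat. rewrite isat_ibigor. split.
  - intros [b' [hle h]]. apply sat_iex_ext in h; [|apply HPsi|auto].
    destruct h as [g h]. eauto.
  - intros [b' [g [h1 [h2 h3]]]]. exists b'. split; [apply h2|].
    apply sat_iex_ext; [apply HPsi|apply h2|eauto].
Qed.

Definition inot (Phi : K -> inf_form K) : K -> inf_form K := iforall_ext (fun b => ineg (Phi b)).
Definition iclosure (Psi : K -> inf_form K) : K -> inf_form K := iforall_ext (iexists_ext Psi).

Lemma sat_inot x Phi b f : bounded_free Phi -> (sat x f (inot Phi b) <-> never_sat x Phi b f).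
Proof. intros H. apply sat_iforall_ext, bounded_free_ineg, H. Qed.

Lemma sat_iclosure x Psi b f : bounded_free Psi -> (sat x f (iclosure Psi b) <-> densely_sat x Psi b f).
Proof.
  intros H. unfold iclosure. rewrite sat_iforall_ext by (apply bounded_free_iexists_ext, H).
  split; intros h b' g hg he; specialize (h b' g hg he); rewrite sat_iexists_ext in *; auto.
Qed.

Definition admissible {W} (ltW : W -> W -> Prop) (a : W) (Phi : K -> inf_form K) :=
  (forall b, iwf (Phi b)) /\ bounded_free Phi /\ forall b, rank_le ltW a (Phi b).

Lemma admissible_bounded_free {W} (ltW : W -> W -> Prop) a Phi : admissible ltW a Phi -> bounded_free Phi.
Proof. intros H. apply H. Qed.

Lemma admissible_embed {W W'} (ltW : W -> W -> Prop) (ltW' : W' -> W' -> Prop) (h : W -> W') a Phi :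
  (forall x y, ltW x y -> ltW' (h x) (h y)) -> admissible ltW a Phi -> admissible ltW' (h a) Phi.
Proof. intros Hh [h1 [h2 h3]]. repeat split; auto. intros b. eapply rank_le_embed; eauto. Qed.

Lemma admissible_mono {W} (ltW : W -> W -> Prop) a a' Phi : well_order ltW ->
  ltW a a' -> admissible ltW a Phi -> admissible ltW a' Phi.
Proof. intros Hwo h [h1 [h2 h3]]. repeat split; auto. intros b. eapply rank_le_mono; eauto. apply Hwo. Qed.

Lemma admissible_inot {W} (ltW : W -> W -> Prop) a a' Phi :
  admissible ltW a Phi -> ltW a a' -> admissible ltW a' (inot Phi).
Proof.
  intros [Hwf [Hfree Hrk]] Ha. split; [|split].
  - apply iwf_iforall_ext. exact Hwf.
  - apply bounded_free_iforall_ext, bounded_free_ineg, Hfree.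
  - apply (rank_le_iforall_ext ltW a); auto.
Qed.

Lemma admissible_iclosure {W} (ltW : W -> W -> Prop) a a1 a2 Psi :
  admissible ltW a Psi -> ltW a a1 -> ltW a1 a2 -> admissible ltW a2 (iclosure Psi).
Proof.
  intros [Hwf [Hfree Hrk]] Ha1 Ha2. split; [|split].
  - apply iwf_iforall_ext, iwf_iexists_ext, Hwf.
  - apply bounded_free_iforall_ext, bounded_free_iexists_ext, Hfree.
  - apply (rank_le_iforall_ext ltW a1); auto. apply (rank_le_iexists_ext ltW a); auto.
Qed.

Definition zero : K := bot.
Definition one : K := succ bot.
Definition positive (y : K) := exists z, lt z y.

(* The code of the pull-back of [M_x] along [s], with [one] and [zero] as truth values. *)
Definition transport (s x : K -> K) : K -> K := fun d =>
  match pinv d with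
  | k :: l => if em (exists m, k = iota m /\ length l = arity m /\ positive (x (pi (k :: map s l))))
              then one else zero
  | [] => zero
  end.

Definition persistent (x : K -> K) (Phi : K -> inf_form K) :=
  forall b f b' g, inj_below b' g -> extends b f b' g -> sat x f (Phi b) -> sat x g (Phi b').
Definition dense_closed (x : K -> K) (Phi : K -> inf_form K) :=
  forall b f, inj_below b f -> densely_sat x Phi b f -> sat x f (Phi b).
Definition generic_defines (S : (K -> K) -> Prop) (x : K -> K) (Phi : K -> inf_form K) :=
  exists D : K -> K -> (K -> K) -> Prop, (forall i, dense (D i)) /\
    forall s, bijective s -> (forall i, meets s (D i)) ->
      (S (transport s x) <-> exists b, sat x s (Phi b)).

(* [sat x f (Phi b)] reads "the condition [(b, f)] forces [S (transport s x)] for generic [s]":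
   [Phi] is an L_{kappa^+ kappa} version of the Vaught transform of [S]. *)
Definition preforces (S : (K -> K) -> Prop) (Phi : K -> inf_form K) :=
  forall x, persistent x Phi /\ generic_defines S x Phi.
Definition forces (S : (K -> K) -> Prop) (Phi : K -> inf_form K) :=
  forall x, persistent x Phi /\ dense_closed x Phi /\ generic_defines S x Phi.

Lemma forces_ext S S' Phi : (forall y, S y <-> S' y) -> forces S Phi -> forces S' Phi.
Proof.
  intros E H x. destruct (H x) as [h1 [h2 [D [h3 h4]]]]. repeat split; auto.
  exists D. split; auto. intros s hs hm. rewrite <- E. auto.
Qed.

Lemma forces_preforces S Phi : forces S Phi -> preforces S Phi.
Proof. intros H x. destruct (H x) as [h1 [_ h2]]. auto. Qed.

Lemma dense_trivial : dense (fun _ _ => True).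
Proof. intros b f hf. exists b, f. auto using extends_refl. Qed.

Definition dense_merge (E : K -> (K -> K) -> Prop) (D : K -> K -> (K -> K) -> Prop) :
  K -> K -> (K -> K) -> Prop :=
  fun i => match pinv i with [] => E | k :: _ => D k end.

Lemma dense_merge_dense E D : dense E -> (forall i, dense (D i)) -> forall i, dense (dense_merge E D i).
Proof. intros h1 h2 i. unfold dense_merge. destruct (pinv i); auto. Qed.

Lemma dense_merge_meets E D s : (forall i, meets s (dense_merge E D i)) ->
  meets s E /\ forall k, meets s (D k).
Proof.
  intros h. split.
  - specialize (h (pi [])). unfold dense_merge in h. rewrite pinv_pi in h. auto.
  - intros k. specialize (h (pi [k])). unfold dense_merge in h. rewrite pinv_pi in h. auto.
Qed.

Definition decides (x : K -> K) (Phi : K -> inf_form K) (b : K) (f : K -> K) :=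
  sat x f (Phi b) \/ never_sat x Phi b f.

Lemma decides_dense x Phi : dense (decides x Phi).
Proof.
  intros b f hf.
  destruct (classic (exists b' g, inj_below b' g /\ extends b f b' g /\ sat x g (Phi b'))) as [[b' [g h]]|h].
  - exists b', g. unfold decides. tauto.
  - exists b, f. split; [auto|split; [apply extends_refl|]].
    right. intros b' g hg he hs. apply h. exists b', g. auto.
Qed.

Lemma meets_decides x Phi s : bounded_free Phi -> meets s (decides x Phi) ->
  (exists b, sat x s (Phi b)) \/ (exists b, never_sat x Phi b s).
Proof.
  intros HPhi [b [g [[h|h] hg]]].
  - left. exists b. eapply sat_bounded_free; eauto.
  - right. exists b. intros b' g' hg' [hle he]. apply h; auto. split; auto.
    intros a ha. rewrite hg; auto.
Qed.

Lemma sat_not_never_sat x Phi s b b' : persistent x Phi -> bijective s ->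
  sat x s (Phi b) -> ~ never_sat x Phi b' s.
Proof.
  intros Hmono hs h hn. apply (hn (kmax b b') s); auto using bijective_inj_below, extends_same, le_kmax_r.
  apply (Hmono b s); auto using bijective_inj_below, extends_same, le_kmax_l.
Qed.

Section ForcingNegation.

Variable x : K -> K.
Variable Phi : K -> inf_form K.
Hypothesis HPhi : bounded_free Phi.
Hypothesis Hmono : persistent x Phi.

Lemma persistent_inot : persistent x (inot Phi).
Proof.
  intros b f b' g hg he h. rewrite sat_inot in *; auto.
  intros b'' h'' hh he'. apply h; eauto using extends_trans.
Qed.

Lemma dense_closed_inot : dense_closed x (inot Phi).
Proof.
  intros b f hf H. rewrite sat_inot; auto. intros b' g hg he hs.
  destruct (H b' g hg he) as [b'' [h'' [hh [he' hs']]]].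
  rewrite sat_inot in hs'; auto. apply (hs' b'' h''); auto using extends_refl. apply (Hmono b' g); auto.
Qed.

Lemma generic_defines_inot S : generic_defines S x Phi -> generic_defines (fun y => ~ S y) x (inot Phi).
Proof.
  intros [D [HDd HT]]. exists (dense_merge (decides x Phi) D).
  split; [apply dense_merge_dense; auto using decides_dense|].
  intros s hs hm. apply dense_merge_meets in hm. destruct hm as [hE hD].
  rewrite (HT s hs hD). setoid_rewrite sat_inot; auto. split.
  - intros n. destruct (meets_decides x Phi s HPhi hE) as [h|h]; tauto.
  - intros [b hN] [b2 h2]. exact (sat_not_never_sat x Phi s b2 b Hmono hs h2 hN).
Qed.

End ForcingNegation.

Lemma forces_inot S Phi : bounded_free Phi -> forces S Phi -> forces (fun y => ~ S y) (inot Phi).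
Proof.
  intros HPhi HS x. destruct (HS x) as [Hmono [_ HT]].
  auto using persistent_inot, dense_closed_inot, generic_defines_inot.
Qed.

Section ForcingClosure.

Variable x : K -> K.
Variable Psi : K -> inf_form K.
Hypothesis HPsi : bounded_free Psi.

Lemma persistent_iclosure : persistent x (iclosure Psi).
Proof.
  intros b f b' g hg he h. rewrite sat_iclosure in *; auto.
  intros b'' h'' hh he'. apply h; eauto using extends_trans.
Qed.

Lemma dense_closed_iclosure : dense_closed x (iclosure Psi).
Proof.
  intros b f hf H. rewrite sat_iclosure; auto. intros b' g hg he.
  destruct (H b' g hg he) as [b'' [h'' [hh [he' hs']]]].
  rewrite sat_iclosure in hs'; auto.
  destruct (hs' b'' h'' hh (extends_refl _ _)) as [b3 [h3 [k1 [k2 k3]]]].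
  exists b3, h3. eauto using extends_trans.
Qed.

Lemma generic_defines_iclosure S : persistent x Psi -> generic_defines S x Psi ->
  generic_defines S x (iclosure Psi).
Proof.
  intros Hmono [D [HDd HT]]. exists (dense_merge (decides x Psi) D).
  split; [apply dense_merge_dense; auto using decides_dense|].
  intros s hs hm. apply dense_merge_meets in hm. destruct hm as [hE hD].
  rewrite (HT s hs hD). setoid_rewrite sat_iclosure; auto. split.
  - intros [b hb]. exists b. intros b' g hg he. exists b', g. split; auto.
    split; [apply extends_refl|]. apply (Hmono b s); auto.
  - intros [b hb]. destruct (meets_decides x Psi s HPsi hE) as [h|[b1 h]]; auto. exfalso.
    destruct (hb (kmax b b1) s (bijective_inj_below s _ hs) (extends_same _ _ _ (le_kmax_l _ _)))
      as [b3 [h3 [k1 [k2 k3]]]].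
    apply (h b3 h3); auto. eapply extends_trans; [|exact k2]. apply extends_same, le_kmax_r.
Qed.

End ForcingClosure.

Lemma forces_iclosure S Psi : bounded_free Psi -> preforces S Psi -> forces S (iclosure Psi).
Proof.
  intros HPsi HS x. destruct (HS x) as [Hmono HT].
  auto using persistent_iclosure, dense_closed_iclosure, generic_defines_iclosure.
Qed.

Definition iunion (Phi : K -> K -> inf_form K) : K -> inf_form K :=
  fun b => ibigor (fun _ => True) (fun i => Phi i b).

Lemma admissible_iunion {W} (ltW : W -> W -> Prop) a Phi :
  (forall i, admissible ltW a (Phi i)) -> admissible ltW a (iunion Phi).
Proof.
  intros H. split; [|split].
  - intros b. apply iwf_ibigor. intros i _. apply H.
  - intros b v h. destruct (ifree_ibigor _ _ _ h) as [i [_ h']]. exact (proj1 (proj2 (H i)) b v h').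
  - intros b. apply rank_le_ibigor. intros i _. apply H.
Qed.

Definition dense_pair (D : K -> K -> K -> (K -> K) -> Prop) : K -> K -> (K -> K) -> Prop :=
  fun k => match pinv k with [i; j] => D i j | _ => fun _ _ => True end.

Lemma dense_pair_dense D : (forall i j, dense (D i j)) -> forall k, dense (dense_pair D k).
Proof.
  intros H k. unfold dense_pair. destruct (pinv k) as [|i [|j [|]]]; auto using dense_trivial.
Qed.

Lemma dense_pair_meets D s : (forall k, meets s (dense_pair D k)) -> forall i j, meets s (D i j).
Proof. intros h i j. specialize (h (pi [i; j])). unfold dense_pair in h. rewrite pinv_pi in h. exact h. Qed.

Lemma preforces_iunion (S : K -> (K -> K) -> Prop) Phi :
  (forall i, preforces (S i) (Phi i)) -> preforces (fun y => exists i, S i y) (iunion Phi).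
Proof.
  intros HS x. split.
  - intros b f b' g hg he h. unfold sat, iunion in *. rewrite isat_ibigor in *.
    destruct h as [i [_ h]]. exists i. split; auto. apply (proj1 (HS i x) b f); auto.
  - assert (HD : forall i, {D : K -> K -> (K -> K) -> Prop | (forall j, dense (D j)) /\
                               forall s, bijective s -> (forall j, meets s (D j)) ->
                               (S i (transport s x) <-> exists b, sat x s (Phi i b))}).
    { intros i. apply constructive_indefinite_description. apply (HS i x). }
    exists (dense_pair (fun i => proj1_sig (HD i))).
    split; [apply dense_pair_dense; intros i; apply (proj2_sig (HD i))|].
    intros s hs hm. pose proof (dense_pair_meets _ _ hm) as hm'.
    unfold sat, iunion. setoid_rewrite isat_ibigor. split.
    + intros [i h]. rewrite (proj2 (proj2_sig (HD i)) s hs (hm' i)) in h. destruct h as [b h]. eauto.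
    + intros [b [i [_ h]]]. exists i. rewrite (proj2 (proj2_sig (HD i)) s hs (hm' i)). eauto.
Qed.

Lemma admissible_ifalse {W} (ltW : W -> W -> Prop) a : admissible ltW a (fun _ => ifalse).
Proof. split; [|split]; simpl; try tauto. intros b v h. destruct (ifree_itrue v h). Qed.

Lemma preforces_ifalse : preforces (fun _ => False) (fun _ => ifalse).
Proof.
  intros x. split.
  - intros b f b' g _ _ h. destruct (isat_ifalse _ _ h).
  - exists (fun _ _ _ => True). split; [intros; apply dense_trivial|].
    intros s _ _. split; [tauto|]. intros [b h]. exact (isat_ifalse _ _ h).
Qed.

Definition symbol_index (k : K) : nat := epsilon (inhabits 0) (fun m => k = iota m).

Lemma symbol_index_iota m : symbol_index (iota m) = m.
Proof.
  apply iota_inj. symmetry. apply (epsilon_spec (inhabits 0) (fun m' => iota m = iota m')). eauto.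
Qed.

Lemma one_neq_zero : one <> zero.
Proof. intros e. apply (lt_irrefl bot). unfold one, zero in e. rewrite <- e at 2. apply lt_succ. Qed.

Lemma transport_values s x d : transport s x d = one \/ transport s x d = zero.
Proof.
  unfold transport. destruct (pinv d) as [|k l]; auto.
  destruct (em _); auto.
Qed.

Definition iatom_of_code (d : K) : inf_form K :=
  match pinv d with
  | k :: l => if em (exists m, k = iota m /\ length l = arity m)
              then iatom (symbol_index k) l else ifalse
  | [] => ifalse
  end.

Lemma sat_iatom_of_code x s d : sat x s (iatom_of_code d) <-> transport s x d = one.
Proof.
  pose proof one_neq_zero as onz. pose proof (isat_ifalse (Mcode x) s) as hF.
  unfold iatom_of_code, transport, sat.
  destruct (pinv d) as [|k l]; [split; [tauto|congruence]|].
  destruct (em (exists m, k = iota m /\ length l = arity m)) as [[m [-> hl]]|hn].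
  - rewrite symbol_index_iota. simpl. rewrite length_map.
    destruct (em (exists m', iota m = iota m' /\ length l = arity m' /\
                 positive (x (pi (iota m :: map s l))))) as [h|h].
    + split; [auto|]. destruct h as [m' [e [_ hp]]]. auto.
    + split; [|congruence]. intros [_ [_ hp]]. destruct h. eauto.
  - destruct (em _) as [[m [e [hl _]]]|]; [destruct hn; eauto|]. split; [tauto|congruence].
Qed.

Lemma ifree_iatom_of_code d v : ifree (iatom_of_code d) v -> In v (pinv d).
Proof.
  unfold iatom_of_code. destruct (pinv d) as [|k l]; [|destruct (em _)];
    simpl; auto; intros h; destruct (ifree_itrue v h).
Qed.

Definition ientry (q : K -> K) (d : K) : inf_form K :=
  if em (q d = one) then iatom_of_code d
  else if em (q d = zero) then ineg (iatom_of_code d) else ifalse.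

Lemma sat_ientry q x s d : sat x s (ientry q d) <-> transport s x d = q d.
Proof.
  pose proof one_neq_zero as onz. pose proof (isat_ifalse (Mcode x) s) as hF.
  pose proof (sat_iatom_of_code x s d) as hA. pose proof (transport_values s x d) as hv.
  unfold ientry. destruct (em (q d = one)) as [->|h1]; [|destruct (em (q d = zero)) as [->|h2]].
  - exact hA.
  - change (~ sat x s (iatom_of_code d) <-> transport s x d = zero). rewrite hA.
    destruct hv as [-> | ->]; split; congruence.
  - split; [tauto|]. intros e. destruct hv; congruence.
Qed.

Lemma ifree_ientry q d v : ifree (ientry q d) v -> In v (pinv d).
Proof.
  unfold ientry. destruct (em _); [|destruct (em _)]; try apply ifree_iatom_of_code.
  intros h. destruct (ifree_itrue v h).
Qed.

Lemma iwf_rank_le_ientry {W} (ltW : W -> W -> Prop) a q d : iwf (ientry q d) /\ rank_le ltW a (ientry q d).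
Proof.
  unfold ientry, iatom_of_code.
  destruct (em _); [|destruct (em _)]; destruct (pinv d); try destruct (em _); simpl; tauto.
Qed.

Section Neighbourhood.

Variable Y : K -> Prop.
Variable q : K -> K.
Hypothesis HY : smaller Y.

Definition vars_below (b d : K) := forall v, In v (pinv d) -> lt v b.

Definition inbhd (b : K) : inf_form K :=
  iconj Y (fun d => if em (vars_below b d) then ientry q d else ifalse).

Lemma sat_inbhd x s b : sat x s (inbhd b) <-> forall d, Y d -> vars_below b d /\ sat x s (ientry q d).
Proof.
  unfold sat, inbhd. simpl isat at 1. split.
  - intros h d hd. specialize (h d hd). destruct (em (vars_below b d)); auto.
    destruct (isat_ifalse _ _ h).
  - intros h d hd. destruct (h d hd) as [h1 h2]. destruct (em (vars_below b d)); tauto.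
Qed.

Lemma admissible_inbhd {W} (ltW : W -> W -> Prop) a : admissible ltW a inbhd.
Proof.
  split; [|split].
  - intros b d hd. destruct (em (vars_below b d)); [apply (iwf_rank_le_ientry ltW a)|simpl; tauto].
  - intros b v [d [hd h]]. destruct (em (vars_below b d)) as [e|e].
    + apply e, (ifree_ientry q), h.
    + destruct (ifree_itrue v h).
  - intros b d hd. destruct (em (vars_below b d)); [apply (iwf_rank_le_ientry ltW a)|simpl; tauto].
Qed.

Lemma preforces_inbhd : preforces (nbhd Y q) inbhd.
Proof.
  intros x. split.
  - intros b f b' g hg [hle he] h. rewrite sat_inbhd in *. intros d hd. destruct (h d hd) as [h1 h2].
    split; [intros v hv; eapply lt_le_trans; eauto|].
    unfold sat in *. rewrite <- (isat_agree (Mcode x) (ientry q d) f g); auto.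
    intros v hv. apply he, h1, (ifree_ientry q), hv.
  - exists (fun _ _ _ => True). split; [intros; apply dense_trivial|].
    intros s _ _. unfold nbhd. setoid_rewrite sat_inbhd. setoid_rewrite sat_ientry. split.
    + intros h. destruct (bounded_union Y (fun d v => In v (pinv d)) HY) as [c hc].
      { intros d _. apply list_bounded. }
      exists c. intros d hd. split; auto. intros v hv. eapply hc; eauto.
    + intros [b h] d hd. apply h; auto.
Qed.

End Neighbourhood.

Lemma transport_isomorphic s x : bijective s -> isomorphic arity (Mcode (transport s x)) (Mcode x).
Proof.
  intros hs. exists s. split; auto. intros m l hl. simpl.
  unfold transport. rewrite pinv_pi, length_map.
  destruct (em _) as [h|h].
  - destruct h as [m' [e [h1 h2]]]. split; intros _; split; auto. exists bot. apply lt_succ.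
  - split; intros [_ [z hz]].
    + destruct (bot_minimal z hz).
    + destruct h. exists m. repeat split; auto. exists z. auto.
Qed.

Lemma iso_T_transport T eta s xi : bijective s ->
  (iso_T lt iota pi arity T (eta, transport s xi) <-> iso_T lt iota pi arity T (eta, xi)).
Proof.
  intros hs. unfold iso_T. simpl. fold (Mcode eta) (Mcode (transport s xi)) (Mcode xi).
  pose proof (transport_isomorphic s xi hs) as I1. pose proof (isomorphic_sym _ _ _ I1) as I2.
  split; intros [[h1 [h2 h3]]|[h1 h2]].
  - left. split; [|split]; eauto using models_isomorphic, isomorphic_trans.
  - right. split; eauto using models_isomorphic.
  - left. split; [|split]; eauto using models_isomorphic, isomorphic_trans.
  - right. split; eauto using models_isomorphic.
Qed.

(** * Ranks, and the induction over kappa-Borel sets *)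

Definition lt_option {W} (ltW : W -> W -> Prop) (a b : option W) : Prop :=
  match a, b with Some x, Some y => ltW x y | Some _, None => True | _, _ => False end.

Lemma well_order_option {W} (ltW : W -> W -> Prop) : well_order ltW -> well_order (lt_option ltW).
Proof.
  intros [wf [irr [tr tri]]].
  assert (HS : forall x, Acc (lt_option ltW) (Some x)).
  { intros x. induction x as [x IH] using (well_founded_ind wf). constructor.
    intros [y|] h; simpl in h; [apply IH; auto|contradiction]. }
  split; [|split; [|split]].
  - intros [x|]; auto. constructor. intros [y|] h; simpl in h; [apply HS|contradiction].
  - intros [x|]; simpl; auto.
  - intros [x|] [y|] [z|]; simpl; eauto; tauto.
  - intros [x|] [y|]; simpl; auto. destruct (tri x y) as [h|[h|h]]; subst; auto.
Qed.

Ltac inj_existT :=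
  repeat match goal with H : existT _ _ _ = existT _ _ _ |- _ => apply inj_pair2 in H end; subst.

Lemma well_order_lexprod (A : Type) (ltA : A -> A -> Prop)
  (B : A -> Type) (ltB : forall a, B a -> B a -> Prop) :
  well_order ltA -> (forall a, well_order (ltB a)) -> well_order (lexprod A B ltA ltB).
Proof.
  intros [wfA [irrA [trA triA]]] HB.
  assert (HBirr : forall a x, ~ ltB a x x) by (intros a; apply HB).
  assert (HBtr : forall a x y z, ltB a x y -> ltB a y z -> ltB a x z) by (intros a; apply HB).
  assert (HBtri : forall a x y, ltB a x y \/ x = y \/ ltB a y x) by (intros a; apply HB).
  split; [|split; [|split]].
  - apply wf_lexprod; auto. intros a; apply HB.
  - intros [a x] H. inversion H; inj_existT; [eapply irrA|eapply HBirr]; eassumption.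
  - intros [a x] [b y] [c z] H1 H2.
    inversion H1; inj_existT; inversion H2; inj_existT; eauto using left_lex, right_lex.
  - intros [a x] [b y]. destruct (triA a b) as [h|[<-|h]].
    + left. apply left_lex; auto.
    + destruct (HBtri a x y) as [h|[<-|h]]; [left|right; left|right; right]; auto using right_lex.
    + right; right. apply left_lex; auto.
Qed.

Record rank_order := RankOrder {
  ro_carrier :> Type;
  ro_lt : ro_carrier -> ro_carrier -> Prop;
  ro_well_order : well_order ro_lt;
  ro_small : exists g : ro_carrier -> K, injective g }.

Lemma small_option (R : rank_order) : exists g : option R -> K, injective g.
Proof.
  destruct (ro_small R) as [g hg].
  exists (fun o => match o with Some w => pi [g w] | None => pi [] end).
  intros [x|] [y|] e; apply (proj1 Hpi) in e; try discriminate; auto.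
  injection e; intros e'. f_equal. auto.
Qed.

Definition ro_option (R : rank_order) : rank_order :=
  {| ro_carrier := option R; ro_lt := lt_option (ro_lt R);
     ro_well_order := well_order_option _ (ro_well_order R);
     ro_small := small_option R |}.

Lemma small_sum (R : K -> rank_order) : exists g : {i : K & R i} -> K, injective g.
Proof.
  assert (G : forall i, {g : R i -> K | injective g}).
  { intros i. apply constructive_indefinite_description, ro_small. }
  exists (fun w => pi [projT1 w; proj1_sig (G (projT1 w)) (projT2 w)]).
  intros [i x] [j y] e. simpl in e. apply (proj1 Hpi) in e. injection e; intros e2 <-.
  apply (proj2_sig (G i)) in e2. subst. auto.
Qed.

Definition ro_sum (R : K -> rank_order) : rank_order :=
  {| ro_carrier := {i : K & R i}; ro_lt := lexprod K (fun i => R i) lt (fun i => ro_lt (R i));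
     ro_well_order := well_order_lexprod K lt (fun i => R i) (fun i => ro_lt (R i))
                        (proj1 Hreg) (fun i => ro_well_order (R i));
     ro_small := small_sum R |}.

Lemma well_order_nat : well_order Peano.lt.
Proof.
  split; [apply Wf_nat.lt_wf|].
  split; [apply Nat.lt_irrefl|split; [apply Nat.lt_trans|apply Nat.lt_trichotomy]].
Qed.

Lemma small_nat : exists g : nat -> K, injective g.
Proof. exists iota. intros x y. apply iota_inj. Qed.

Definition ro_nat : rank_order :=
  {| ro_carrier := nat; ro_lt := Peano.lt; ro_well_order := well_order_nat; ro_small := small_nat |}.

Definition forcing_definable (A : (K -> K) * (K -> K) -> Prop) : Prop :=
  exists (R : rank_order) (alpha : R), forall eta,
    exists Phi, admissible (ro_lt R) alpha Phi /\ forces (fun y => A (eta, y)) Phi.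

Lemma forcing_definable_ext A B : forcing_definable A -> (forall z, A z <-> B z) -> forcing_definable B.
Proof.
  intros [R [alpha HR]] E. exists R, alpha. intros eta. destruct (HR eta) as [Phi [h1 h2]].
  exists Phi. split; auto. eapply forces_ext; eauto. intros y; simpl; auto.
Qed.

Lemma forcing_definable_compl A : forcing_definable A -> forcing_definable (fun z => ~ A z).
Proof.
  intros [R [alpha HR]]. exists (ro_option R), None. intros eta.
  destruct (HR eta) as [Phi [h1 h2]]. exists (inot Phi). split.
  - apply (admissible_inot _ (Some alpha)); [|exact I].
    apply (admissible_embed (ro_lt R) _ Some); auto.
  - apply forces_inot; auto. apply h1.
Qed.

Lemma forcing_definable_union (A : K -> (K -> K) * (K -> K) -> Prop) :
  (forall i, forcing_definable (A i)) -> forcing_definable (fun z => exists i, A i z).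
Proof.
  intros HA.
  assert (HR : forall i, {R : rank_order & {alpha : R | forall eta,
                 exists Phi, admissible (ro_lt R) alpha Phi /\ forces (fun y => A i (eta, y)) Phi}}).
  { intros i. destruct (constructive_indefinite_description _ (HA i)) as [R hR].
    exists R. apply constructive_indefinite_description, hR. }
  set (R := ro_option (ro_option (ro_option (ro_sum (fun i => projT1 (HR i)))))).
  exists R, (None : R). intros eta.
  assert (HP : forall i, {Phi | admissible (ro_lt (projT1 (HR i))) (proj1_sig (projT2 (HR i))) Phi /\
                                forces (fun y => A i (eta, y)) Phi}).
  { intros i. apply constructive_indefinite_description, (proj2_sig (projT2 (HR i))). }
  set (Phi := fun i => proj1_sig (HP i)).
  assert (Hadm : forall i, admissible (ro_lt R) (Some (Some None)) (Phi i)).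
  { intros i. apply (admissible_mono _ (Some (Some (Some (existT _ i (proj1_sig (projT2 (HR i))))))));
      [exact (ro_well_order R)|exact I|].
    apply (admissible_embed (ro_lt (projT1 (HR i))) (ro_lt R) (fun w => Some (Some (Some (existT _ i w))))).
    - intros x y h. apply right_lex, h.
    - apply (proj2_sig (HP i)). }
  exists (iclosure (iunion Phi)). split.
  - apply (admissible_iclosure _ (Some (Some None)) (Some None)); [apply admissible_iunion| |]; auto; exact I.
  - apply forces_iclosure; [eapply admissible_bounded_free, admissible_iunion, Hadm|].
    apply preforces_iunion. intros i. apply forces_preforces, (proj2_sig (HP i)).
Qed.

Lemma forcing_definable_basic (c : (K -> K) -> Prop) (Y : K -> Prop) (q : K -> K) : smaller Y ->
  forcing_definable (fun z => c (fst z) /\ nbhd Y q (snd z)).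
Proof.
  intros HY. exists ro_nat, 2. intros eta. simpl.
  destruct (classic (c eta)) as [hc|hc].
  - exists (iclosure (inbhd Y q)). split.
    + apply (admissible_iclosure _ 0 1); auto using admissible_inbhd.
    + apply (forces_ext (nbhd Y q)); [tauto|].
      apply forces_iclosure; [eapply admissible_bounded_free, (admissible_inbhd Y q Peano.lt 0)|].
      apply preforces_inbhd, HY.
  - exists (iclosure (fun _ => ifalse)). split.
    + apply (admissible_iclosure _ 0 1); auto using admissible_ifalse.
    + apply (forces_ext (fun _ => False)); [tauto|].
      apply forces_iclosure; [eapply admissible_bounded_free, (admissible_ifalse Peano.lt 0)|].
      apply preforces_ifalse.
Qed.

Lemma kBorel_forcing_definable A : kBorel A -> forcing_definable A.
Proof.
  induction 1.
  - apply (forcing_definable_ext _ _ (forcing_definable_basic (fun _ => False) (fun _ => False) (fun _ => bot)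
      (bounded_smaller _ bot (fun _ h => False_ind _ h)))). simpl. tauto.
  - apply (forcing_definable_ext _ _ (forcing_definable_basic (nbhd X p) Y q H0)). simpl. tauto.
  - apply forcing_definable_compl; auto.
  - apply forcing_definable_union; auto.
  - apply (forcing_definable_ext (fun z => ~ exists i, ~ F i z)).
    + apply forcing_definable_compl, forcing_definable_union. intros i. apply forcing_definable_compl. auto.
    + intros z. split; [intros h i; apply NNPP; eauto|intros h [i h']; auto].
  - eapply forcing_definable_ext; eauto.
Qed.

Lemma forces_invariant_iff S Phi : forces S Phi -> bounded_free Phi ->
  (forall s xi, bijective s -> (S (transport s xi) <-> S xi)) ->
  forall xi f, S xi <-> sat xi f (Phi bot).
Proof.
  intros HS HPhi Hinv xi f. destruct (HS xi) as [Hmono [Hcl [D [HDd HT]]]].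
  split.
  - intros hS. apply Hcl; [apply inj_below_bot|]. intros b' g hg he.
    destruct (generic_bijection_exists D HDd b' g hg) as [s [hs [hsg hm]]].
    rewrite <- (Hinv s xi hs), (HT s hs hm) in hS. destruct hS as [b hb].
    exists (kmax b b'), s. split; [apply bijective_inj_below; auto|split].
    + split; [apply le_kmax_r|]. intros a ha. symmetry. auto.
    + apply (Hmono b s); auto using bijective_inj_below, extends_same, le_kmax_l.
  - intros h. destruct (generic_bijection_exists D HDd bot f (inj_below_bot f)) as [s [hs [_ hm]]].
    rewrite <- (Hinv s xi hs), (HT s hs hm). exists bot.
    apply (sat_bounded_free xi Phi bot f); auto. intros a ha. destruct (bot_minimal _ ha).
Qed.

End Kappa.

Theorem theorem4p4 (K : Type) (lt : K -> K -> Prop) (iota : nat -> K)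
  (pi : list K -> K) (arity : nat -> nat) (T : fo_form -> Prop) :
  regular_cardinal lt ->
  canonical_omega lt iota ->
  bijective pi ->
  (forall f, T f -> fo_sentence f) ->
  complete_theory arity T ->
  (forall (W : Type) (ltW : W -> W -> Prop),
     well_order ltW -> (exists g : W -> K, injective g) ->
     forall alpha : W,
       exists eta eta' : K -> K,
         models arity T (M_of lt iota pi arity eta)
         /\ models arity T (M_of lt iota pi arity eta')
         /\ inf_equiv K ltW alpha arity (M_of lt iota pi arity eta) (M_of lt iota pi arity eta')
         /\ ~ isomorphic arity (M_of lt iota pi arity eta) (M_of lt iota pi arity eta')) ->
  ~ kBorel (iso_T lt iota pi arity T).
Proof.
  intros Hreg Hiota Hpi _ _ Hcounter HB.
  destruct (kBorel_forcing_definable K lt Hreg iota Hiota pi Hpi arity _ HB) as [R [alpha HR]].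
  destruct (Hcounter R (ro_lt K R) (ro_well_order K R) (ro_small K R) alpha)
    as [eta [eta' [Heta [Heta' [Hequiv Hniso]]]]].
  destruct (HR eta) as [Phi [[Hwf [Hfree Hrank]] Hforces]].
  set (phi := Phi (bot K lt iota)).
  assert (Hdef : forall xi f, iso_T lt iota pi arity T (eta, xi) <-> sat K lt iota pi arity xi f phi).
  { apply (forces_invariant_iff K lt Hreg iota Hiota pi arity _ Phi Hforces Hfree).
    intros s xi hs. apply iso_T_transport; auto. }
  assert (Hsentence : inf_sentence phi).
  { intros v hv. exact (bot_minimal K lt Hreg iota v (Hfree _ _ hv)). }
  assert (Hself : iso_T lt iota pi arity T (eta, eta)) by (left; auto using isomorphic_refl).
  assert (Hother : iso_T lt iota pi arity T (eta, eta')).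
  { apply (Hdef eta' (fun a => a)).
    refine (proj1 (Hequiv phi (Hwf _) Hsentence (Hrank _)) _ (fun a => a)).
    intros s. apply Hdef, Hself. }
  destruct Hother as [[_ [_ Hiso]]|[Hnot _]]; auto.
Qed.
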